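(* Consider the following discrete-time process on three times $r=0<s<t$. The environment at time $r=0$ is in a correlated bipartite state $\eta_{\mathcal{E}_s\mathcal{E}_t}$ (with two parts, one labelled by each later time step), and the system is initially uncorrelated with the environment. Between times $r$ and $s$ the system interacts only with environment part $\mathcal{E}_s$ via the swap unitary $\mathbf{S}_{\mathcal{S}\mathcal{E}_s}$ (where $\mathbf{S}\ket{ij}=\ket{ji}$), and between times $s$ and $t$ the system interacts only with environment part $\mathcal{E}_t$ via the swap unitary $\mathbf{S}_{\mathcal{S}\mathcal{E}_t}$; each environment part is discarded after its interaction. Then the process is operationally CP-divisible, i.e. $\Lambda_{t:r}=\Lambda_{t:s}\circ\Lambda_{s:r}$, where each $\Lambda_{y:x}$ is the experimentally reconstructed map obtained by preparing a fresh system state at $x$ (after discarding the system there) and measuring at $y$. Nonetheless the process is non-Markovian: if the experimenter stores the system state at time $s_{-}$, inserts a fresh (independent) system state at $s_{+}$, lets the dynamics continue to $t$ and stores that output too, the resulting joint state $\rho_{st}$ is exactly the correlated initial environment state $\eta_{\mathcal{E}_s\mathcal{E}_t}$, so it is correlated even though the states inserted at times $r$ and $s_{+}$ were independent.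
   Context: Setting: a finite-dimensional quantum system coupled to an environment, with system–environment unitary dynamics between times. Operational CP (oCP) divisibility: for any $t>s>r$, $\Lambda_{t:r}=\Lambda_{t:s}\circ\Lambda_{s:r}$, where $\Lambda_{t:s}[\rho_s]=\operatorname{tr}_\mathcal{E}[\mathcal{U}_{t:s}(\rho_s\otimes\eta_s)]$ is reconstructed by discarding the system at $s_{-}$, preparing a fresh state $\rho_s$ at $s_{+}$, and measuring at $t$; $\eta_s$ is the reduced environment state at $s$. A process is Markovian iff its process tensor has product form $T=L_{t:s}\otimes L_{s:r}$ (Choi states of the intermediate maps); any correlation between outputs produced from independent inputs signals memory. *)

(* Finite-dimensional quantum operators as matrices indexed
   by a finite basis type, over an arbitrary numClosedFieldType C (e.g. algC,
   the complex algebraic numbers; the statement holds for all of them). *)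
From HB Require Import structures.
From mathcomp Require Import all_boot all_order all_algebra.
Set Implicit Arguments. Unset Strict Implicit. Unset Printing Implicit Defensive.
Import Order.TTheory GRing.Theory Num.Theory.
Local Open Scope ring_scope.

Section Quantum.
Variable C : numClosedFieldType.

Definition op (T : finType) := T -> T -> C.

Definition mulo (T : finType) (A B : op T) : op T :=
  fun i j => \sum_(k : T) A i k * B k j.
Definition adjo (T : finType) (A : op T) : op T := fun i j => (A j i)^*.
Definition conjU (T : finType) (U rho : op T) : op T := mulo (mulo U rho) (adjo U).
Definition traceo (T : finType) (A : op T) : C := \sum_(i : T) A i i.
Definition tens (I J : finType) (A : op I) (B : op J) : op (I * J)%type :=
  fun x y => A x.1 y.1 * B x.2 y.2.
Definition ptr2 (I J : finType) (A : op (I * J)%type) : op I :=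
  fun i k => \sum_(j : J) A (i, j) (k, j).
Definition ptr1 (I J : finType) (A : op (I * J)%type) : op J :=
  fun j l => \sum_(i : I) A (i, j) (i, l).

Definition is_state (T : finType) (rho : op T) : Prop :=
  (forall v : T -> C, 0 <= \sum_(i : T) \sum_(j : T) (v i)^* * rho i j * v j)
  /\ traceo rho = 1.

Definition correlated (I J : finType) (rho : op (I * J)%type) : Prop :=
  ~ exists (A : op I) (B : op J), rho = tens A B.

Definition perm_op (T : finType) (f : T -> T) : op T :=
  fun i j => if i == f j then 1 else 0.

(* ---- The swap process.  System S and environment parts E_s, E_t all have
   basis I (the swap needs equal dimensions).  Global ordering S (E_s E_t). *)
Variable I : finType.
Variable eta : op (I * I)%type.   (* initial environment state on E_s (x) E_t *)

Definition swapSEs_fun (x : (I * (I * I))%type) : (I * (I * I))%type := (x.2.1, (x.1, x.2.2)).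
Definition U_sr : op (I * (I * I))%type := perm_op swapSEs_fun.
(* S|ij> = |ji> on S E_t (E_s already discarded) *)
Definition swapSEt_fun (x : (I * I)%type) : (I * I)%type := (x.2, x.1).
Definition U_ts : op (I * I)%type := perm_op swapSEt_fun.

(* joint S E_s E_t state at s_- given system state rho at r *)
Definition sigma_s (rho : op I) : op (I * (I * I))%type := conjU U_sr (tens rho eta).
Definition tau_s (rho : op I) : op (I * I)%type :=
  fun x y => \sum_(b : I) sigma_s rho (x.1, (b, x.2)) (y.1, (b, y.2)).
Definition eta_s (rho : op I) : op I := ptr1 (tau_s rho).

Definition Lambda_sr (rho : op I) : op I := ptr2 (sigma_s rho).
Definition Lambda_tr (rho : op I) : op I := ptr2 (conjU U_ts (tau_s rho)).
(* rho0 : system state prepared at r in the run that determines eta_s *)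
Definition Lambda_ts (rho0 : op I) (rho : op I) : op I :=
  ptr2 (conjU U_ts (tens rho (eta_s rho0))).

(* Store the system at s_- in an ancilla A, insert fresh rho' at s_+.
   Ordering S (A E_t); the swap acts on S and E_t. *)
Definition swapSEt3_fun (x : (I * (I * I))%type) : (I * (I * I))%type := (x.2.2, (x.2.1, x.1)).
Definition U_ts_anc : op (I * (I * I))%type := perm_op swapSEt3_fun.
(* joint output state rho_st on (stored s-output) (x) (t-output) *)
Definition rho_st (rho rho' : op I) : op (I * I)%type :=
  let W := conjU U_ts_anc (tens rho' (tau_s rho)) in
  fun x y => \sum_(c : I) W (x.2, (x.1, c)) (y.2, (y.1, c)).

End Quantum.

(* Every unitary in the process is a swap, so the experimenter's probes only
   move states around: the state prepared at r ends up in the discarded E_s and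
   contributes just its trace, while the system leaves each step in the state
   of the environment part it was swapped with.  Hence each reconstructed map
   is a trace times a fixed marginal of eta (which gives divisibility), and the
   pair of outputs stored at s and t is eta itself. *)
From mathcomp Require Import all_boot all_algebra.
From Stdlib Require Import FunctionalExtensionality.
Set Implicit Arguments. Unset Strict Implicit. Unset Printing Implicit Defensive.
Import GRing.Theory Num.Theory.
Local Open Scope ring_scope.

Section Operators.
Variable C : numClosedFieldType.

Lemma op_ext (T : finType) (A B : op C T) : (forall x y, A x y = B x y) -> A = B.
Proof.
by move=> eqAB; do 2![apply: functional_extensionality => ?]; apply: eqAB.
Qed.

Section PermOp.
Variables (T : finType) (f : T -> T).
Hypothesis fK : involutive f.

Lemma perm_opE i k : perm_op C f i k = (k == f i)%:R.
Proof. by rewrite /perm_op eq_sym (canF_eq fK); case: eqP. Qed.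

Lemma mulo_perm_op (B : op C T) i j : mulo (perm_op C f) B i j = B (f i) j.
Proof.
rewrite /mulo; under eq_bigr => k _ do rewrite perm_opE mulr_natl mulrb.
by rewrite -big_mkcond big_pred1_eq.
Qed.

Lemma mulo_adj_perm_op (B : op C T) i j :
  mulo B (adjo (perm_op C f)) i j = B i (f j).
Proof.
rewrite /mulo /adjo; under eq_bigr => k _ do rewrite perm_opE conjC_nat mulr_natr mulrb.
by rewrite -big_mkcond big_pred1_eq.
Qed.

Lemma conjU_perm_op (A : op C T) i j : conjU (perm_op C f) A i j = A (f i) (f j).
Proof. by rewrite /conjU mulo_adj_perm_op mulo_perm_op. Qed.

End PermOp.

Lemma ptr1_tens (I J : finType) (A : op C I) (B : op C J) j l :
  ptr1 (tens A B) j l = traceo A * B j l.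
Proof. by rewrite /ptr1 /traceo mulr_suml. Qed.

Lemma traceo_ptr2 (I J : finType) (A : op C (I * J)%type) :
  traceo (ptr2 A) = traceo A.
Proof. by rewrite /traceo /ptr2 pair_bigA; apply: eq_bigr => -[]. Qed.

End Operators.

Section SwapProcess.
Variables (C : numClosedFieldType) (I : finType) (eta : op C (I * I)%type).

Lemma swapSEs_funK : involutive (@swapSEs_fun I).
Proof. by case=> ? []. Qed.

Lemma swapSEt_funK : involutive (@swapSEt_fun I).
Proof. by case. Qed.

Lemma swapSEt3_funK : involutive (@swapSEt3_fun I).
Proof. by case=> ? []. Qed.

Lemma ptr2_conjU_ts (A : op C (I * I)%type) i k :
  ptr2 (conjU (@U_ts C I) A) i k = ptr1 A i k.
Proof. by apply: eq_bigr => j _; rewrite conjU_perm_op //; apply: swapSEt_funK. Qed.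

Lemma sigma_sE rho x y :
  sigma_s eta rho x y = rho x.2.1 y.2.1 * eta (x.1, x.2.2) (y.1, y.2.2).
Proof. by rewrite /sigma_s conjU_perm_op //; apply: swapSEs_funK. Qed.

Lemma tau_sE rho x y : tau_s eta rho x y = traceo rho * eta x y.
Proof.
rewrite /tau_s /traceo mulr_suml.
by apply: eq_bigr => b _; rewrite sigma_sE; case: x; case: y.
Qed.

Lemma Lambda_srE rho i k : Lambda_sr eta rho i k = traceo rho * ptr2 eta i k.
Proof.
rewrite /Lambda_sr /ptr2 /traceo [RHS]big_distrlr [RHS]pair_bigA.
by apply: eq_bigr => -[b c] _; rewrite sigma_sE.
Qed.

Lemma traceo_Lambda_sr rho : traceo eta = 1 -> traceo (Lambda_sr eta rho) = traceo rho.
Proof.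
move=> treta; rewrite {1}/traceo; under eq_bigr => j _ do rewrite Lambda_srE.
by rewrite -mulr_sumr -/(traceo (ptr2 eta)) traceo_ptr2 treta mulr1.
Qed.

Lemma Lambda_trE rho i k : Lambda_tr eta rho i k = traceo rho * ptr1 eta i k.
Proof.
rewrite /Lambda_tr ptr2_conjU_ts /ptr1 mulr_sumr.
by apply: eq_bigr => a _; rewrite tau_sE.
Qed.

Lemma Lambda_tsE rho0 rho i k :
  Lambda_ts eta rho0 rho i k = traceo rho * (traceo rho0 * ptr1 eta i k).
Proof.
rewrite /Lambda_ts ptr2_conjU_ts ptr1_tens /eta_s /ptr1 [in RHS]mulr_sumr.
by congr (_ * _); apply: eq_bigr => a _; rewrite tau_sE.
Qed.

Lemma rho_stE rho rho' x y :
  rho_st eta rho rho' x y = traceo rho' * (traceo rho * eta x y).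
Proof.
rewrite /rho_st /traceo mulr_suml; apply: eq_bigr => c _.
rewrite conjU_perm_op; last exact: swapSEt3_funK.
by rewrite /tens tau_sE; case: x; case: y.
Qed.

End SwapProcess.

Theorem mainTheorem2 (C : numClosedFieldType) (I : finType) (eta : op C (I * I)%type) :
  is_state eta -> correlated eta ->
  (* operational CP divisibility *)
  (forall rho0 : op C I, is_state rho0 ->
     Lambda_tr eta = (Lambda_ts eta rho0) \o (Lambda_sr eta)) /\
  (* non-Markovianity: independent inputs give the correlated output eta *)
  (forall rho rho' : op C I, is_state rho -> is_state rho' ->
     rho_st eta rho rho' = eta /\ correlated (rho_st eta rho rho')).
Proof.
move=> [_ tr_eta] eta_corr; split.
  move=> rho0 [_ tr_rho0]; apply: functional_extensionality => rho.
  apply: op_ext => i k.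
  by rewrite /= Lambda_trE Lambda_tsE traceo_Lambda_sr // tr_rho0 mul1r.
move=> rho rho' [_ tr_rho] [_ tr_rho'].
suff -> : rho_st eta rho rho' = eta by [].
by apply: op_ext => x y; rewrite rho_stE tr_rho tr_rho' !mul1r.
Qed.
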